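(* Suppose $\mathrm{char}(\mathbb{F})=0$ and $h\in\mathbb{F}[x]$. Then $$hA_h=[x,A_h]=[\hat y,A_h]=[A_h,A_h].$$
   Context: For $h\in\mathbb{F}[x]$, $A_h$ is the unital associative $\mathbb{F}$-algebra generated by $x,\hat y$ with defining relation $\hat yx-x\hat y=h$. For $b\in A_h$, $[b,A_h]=\{ba-ab: a\in A_h\}$ (a linear subspace), and $[A_h,A_h]$ is the linear span of all commutators $ab-ba$, $a,b\in A_h$. $hA_h$ is the right ideal generated by $h$ (which is a two-sided ideal since $h$ is normal). *)

From HB Require Import structures.
From mathcomp Require Import all_boot all_order all_algebra.
Set Implicit Arguments. Unset Strict Implicit. Unset Printing Implicit Defensive.
Import Order.TTheory GRing.Theory Num.Theory.
Local Open Scope ring_scope.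

Definition Ah_rel (F : fieldType) (h : {poly F}) (A : algType F) (x y : A) : Prop :=
  y * x - x * y = horner_alg x h.

(* (A, x, y) is "the unital associative F-algebra generated by x, y with the
   single defining relation yx - xy = h": universal property of the presented
   algebra. *)
Definition is_Ah (F : fieldType) (h : {poly F}) (A : algType F) (x y : A) : Prop :=
  Ah_rel h x y /\
  forall (B : algType F) (a b : B), Ah_rel h a b ->
    (exists f : {lrmorphism A -> B}, f x = a /\ f y = b) /\
    (forall f g : {lrmorphism A -> B},
        f x = a -> f y = b -> g x = a -> g y = b -> forall z, f z = g z).

Definition hideal (F : fieldType) (h : {poly F}) (A : algType F) (x : A) (z : A) : Prop :=
  exists a : A, z = horner_alg x h * a.

Definition comm_with (F : fieldType) (A : algType F) (b : A) (z : A) : Prop :=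
  exists a : A, z = b * a - a * b.

Definition comm_span (F : fieldType) (A : algType F) (z : A) : Prop :=
  exists (n : nat) (c : 'I_n -> F) (a b : 'I_n -> A),
    z = \sum_(i < n) c i *: (a i * b i - b i * a i).

From HB Require Import structures.
From mathcomp Require Import all_boot all_order all_algebra.
From Stdlib Require Import ClassicalEpsilon.
Set Implicit Arguments. Unset Strict Implicit. Unset Printing Implicit Defensive.
Import GRing.Theory.
Local Open Scope ring_scope.

(* Write [a, b] = ab - ba.  The proof runs as follows.
   - Generation: by the universal property, a subalgebra containing x and y is
     all of A_h; this yields induction principles over A_h.
   - [y, p(x)] = h(x) p'(x), so y h(x) = h(x) (y + h'(x)) and h(x) A_h is a
     two-sided ideal.  The derivations [x, -] and [y, -] send the generators
     into it, hence every commutator lies in h(x) A_h: [A_h, A_h] ⊆ h A_h.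
   - Every element is a sum of monomials p(x) y^k (ydeg_lt n: those with k < n).
   - h A_h ⊆ [y, A_h]: h(x) q(x) y^k = [y, r(x) y^k] where r' = q (char 0).
   - h A_h ⊆ [x, A_h]: since [x, y^(n+1)] = -(n+1) h(x) y^n + h(x)*(terms of
     y-degree < n), induction on the y-degree, dividing by n + 1 (char 0). *)

Lemma lrmorph_horner (R : comNzRingType) (B C : algType R) (f : {lrmorphism B -> C})
  (a : B) (p : {poly R}) : f (horner_alg a p) = horner_alg (f a) p.
Proof.
elim/poly_ind: p => [|p c IH]; first by rewrite !rmorph0.
by rewrite !rmorphD !rmorphM /= !horner_algX !horner_algC IH rmorph_alg.
Qed.

Lemma horner_algZ (R : comNzRingType) (A : algType R) (a : A) (c : R) (p : {poly R}) :
  horner_alg a (c *: p) = c *: horner_alg a p.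
Proof. by rewrite -mul_polyC rmorphM /= horner_algC mulr_algl. Qed.

Lemma deriv_surj (F : fieldType) : [pchar F] =i pred0 ->
  forall q : {poly F}, exists r : {poly F}, r^`() = q.
Proof.
move=> /pcharf0P charF0 q; exists (\poly_(i < (size q).+1) (q`_i.-1 / i%:R)).
apply/polyP => i; rewrite coef_deriv coef_poly ltnS /=.
case: ltnP => [_ | le_size].
- by rewrite -[_ *+ i.+1]mulr_natr -mulrA mulVf ?mulr1 // charF0.
- by rewrite mul0rn nth_default.
Qed.

Section Subalgebra.
Variables (F : fieldType) (A : algType F) (S : {pred A}).
Hypothesis subalgS : GRing.subalg_closed S.

HB.instance Definition _ :=
  GRing.isSubalgClosed.Build F A S (GRing.subalg_closed_semi subalgS).

Record subalg : Type := Subalg { subalg_val : A; _ : subalg_val \in S }.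
HB.instance Definition _ := [isSub for subalg_val].
HB.instance Definition _ := [Choice of subalg by <:].
HB.instance Definition _ := [SubChoice_isSubAlgebra of subalg by <:].

Definition subalg_incl : subalg -> A := val.
HB.instance Definition _ := GRing.RMorphism.copy subalg_incl val.
HB.instance Definition _ := GRing.Linear.copy subalg_incl val.

Variables (h : {poly F}) (x y : A).
Hypothesis HA : is_Ah h x y.

(* A subalgebra of A_h containing the generators x, y is all of A_h: the
   identity and the inclusion of the subalgebra composed with the morphism
   A_h -> subalgebra given by the universal property agree on x and y. *)
Lemma Ah_subalg_full : x \in S -> y \in S -> forall z, z \in S.
Proof.
move=> Sx Sy z; pose xS := Subalg Sx; pose yS := Subalg Sy.
have relS : Ah_rel h xS yS.
  apply: val_inj; change (subalg_incl (yS * xS - xS * yS) = subalg_incl (horner_alg xS h)).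
  by rewrite lrmorph_horner rmorphB !rmorphM; case: HA.
have [[f [fx fy]] _] := HA.2 _ _ _ relS.
have [_ uniq] := HA.2 _ _ _ HA.1.
have <- : subalg_incl (f z) = z.
  by apply: (uniq (subalg_incl \o f)%FUN idfun) => //=; rewrite ?fx ?fy.
exact: valP.
Qed.
End Subalgebra.

Section Generation.
Variables (F : fieldType) (h : {poly F}) (A : algType F) (x y : A).
Hypothesis HA : is_Ah h x y.

Lemma Ah_ind (P : A -> Prop) : P 1 -> P x -> P y ->
  (forall a b, P a -> P b -> P (a + b)) -> (forall (c : F) a, P a -> P (c *: a)) ->
  (forall a b, P a -> P b -> P (a * b)) -> forall z, P z.
Proof.
move=> P1 Px Py PD PZ PM z.
pose S : {pred A} := fun a => if excluded_middle_informative (P a) then true else false.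
have SP w : w \in S <-> P w by rewrite unfold_in /S; case: excluded_middle_informative.
have subalgS : GRing.subalg_closed S.
  split; first exact/SP.
  - by move=> c u v /SP Pu /SP Pv; apply/SP; exact: PD (PZ _ _ Pu) Pv.
  - by move=> u v /SP Pu /SP Pv; apply/SP; exact: PM.
by apply/SP; apply: (Ah_subalg_full subalgS HA); apply/SP.
Qed.

Lemma Ah_left_ind (P : A -> Prop) : P 1 -> (forall a b, P a -> P b -> P (a + b)) ->
  (forall (c : F) a, P a -> P (c *: a)) -> (forall a, P a -> P (x * a)) ->
  (forall a, P a -> P (y * a)) -> forall z, P z.
Proof.
move=> P1 PD PZ Px Py z.
suff PM : forall a w, P w -> P (a * w) by rewrite -[z]mulr1; exact: PM.
apply: (@Ah_ind (fun a => forall w, P w -> P (a * w))) => //.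
- by move=> w; rewrite mul1r.
- by move=> a b Pa Pb w Pw; rewrite mulrDl; apply: PD; [apply: Pa | apply: Pb].
- by move=> c a Pa w Pw; rewrite -scalerAl; apply/PZ/Pa.
- by move=> a b Pa Pb w Pw; rewrite -mulrA; apply/Pa/Pb.
Qed.
End Generation.

Section Bracket.
Variables (R : nzRingType) (A : algType R).

Definition lie (a b : A) : A := a * b - b * a.

Lemma lieMr a b c : lie a (b * c) = lie a b * c + b * lie a c.
Proof. by rewrite /lie mulrBl mulrBr !mulrA addrA subrK. Qed.

Lemma lieMl a b c : lie (a * b) c = a * lie b c + lie a c * b.
Proof. by rewrite /lie mulrBr mulrBl !mulrA addrA subrK. Qed.

Lemma lieDr a b c : lie a (b + c) = lie a b + lie a c.
Proof. by rewrite /lie mulrDr mulrDl opprD addrACA. Qed.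

Lemma lieDl a b c : lie (a + b) c = lie a c + lie b c.
Proof. by rewrite /lie mulrDr mulrDl opprD addrACA. Qed.

Lemma lieZr a k b : lie a (k *: b) = k *: lie a b.
Proof. by rewrite /lie -scalerAr -scalerAl scalerBr. Qed.

Lemma lieZl a k b : lie (k *: a) b = k *: lie a b.
Proof. by rewrite /lie -scalerAr -scalerAl scalerBr. Qed.

Lemma lie0r a : lie a 0 = 0. Proof. by rewrite /lie mulr0 mul0r subrr. Qed.
Lemma lie1r a : lie a 1 = 0. Proof. by rewrite /lie mulr1 mul1r subrr. Qed.
Lemma lie1l a : lie 1 a = 0. Proof. by rewrite /lie mulr1 mul1r subrr. Qed.
Lemma lieaa a : lie a a = 0. Proof. by rewrite /lie subrr. Qed.
Lemma lieX a k : lie a (a ^+ k) = 0. Proof. by rewrite /lie -exprS -exprSr subrr. Qed.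
Lemma lieN a b : lie a b = - lie b a. Proof. by rewrite /lie opprB. Qed.
End Bracket.

Section CommWith.
Variables (F : fieldType) (A : algType F) (g : A).

Lemma comm_with_lie b : comm_with g (lie g b). Proof. by exists b. Qed.

Lemma comm_with0 : comm_with g 0. Proof. by exists 0; rewrite -/(lie g 0) lie0r. Qed.

Lemma comm_withD a b : comm_with g a -> comm_with g b -> comm_with g (a + b).
Proof. by move=> [c ->] [d ->]; exists (c + d); rewrite -!/(lie g _) lieDr. Qed.

Lemma comm_withZ k a : comm_with g a -> comm_with g (k *: a).
Proof. by move=> [c ->]; exists (k *: c); rewrite -!/(lie g _) lieZr. Qed.

Lemma comm_withB a b : comm_with g a -> comm_with g b -> comm_with g (a - b).
Proof. by move=> ga gb; rewrite -scaleN1r; apply/comm_withD/comm_withZ. Qed.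

Lemma comm_with_span z : comm_with g z -> comm_span z.
Proof.
move=> [b ->]; exists 1%N, (fun _ => 1), (fun _ => g), (fun _ => b).
by rewrite big_ord1 scale1r.
Qed.
End CommWith.

Section Ah.
Variables (F : fieldType) (h : {poly F}) (A : algType F) (x y : A).
Hypothesis HA : is_Ah h x y.

Local Notation ev := (horner_alg x).
Local Notation hx := (horner_alg x h).

Lemma ev_comm p q : ev p * ev q = ev q * ev p.
Proof. by rewrite -!rmorphM mulrC. Qed.

Lemma x_ev p : x * ev p = ev p * x.
Proof. by have := ev_comm 'X p; rewrite horner_algX. Qed.

Lemma lie_x_ev p : lie x (ev p) = 0.
Proof. by rewrite /lie x_ev subrr. Qed.

Lemma lie_y_x : lie y x = hx. Proof. exact: HA.1. Qed.

Lemma lie_y_ev p : lie y (ev p) = hx * ev p^`().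
Proof.
elim/poly_ind: p => [|p c IH]; first by rewrite deriv0 !rmorph0 lie0r mulr0.
rewrite derivMXaddC !rmorphD !rmorphM /= !horner_algX !horner_algC lieDr lieMr IH.
by rewrite lie_y_x lieZr lie1r scaler0 addr0 mulrDr mulrA addrC (ev_comm p h).
Qed.

Lemma y_ev p : y * ev p = ev p * y + hx * ev p^`().
Proof. by rewrite -lie_y_ev /lie addrC subrK. Qed.

Lemma y_hx : y * hx = hx * (y + ev h^`()).
Proof. by rewrite y_ev mulrDr ev_comm. Qed.

(* h(x) A is stable under left multiplication too: a normal element. *)
Lemma hx_normal z : exists c, z * hx = hx * c.
Proof.
apply: (@Ah_ind _ _ _ _ _ HA (fun z => exists c, z * hx = hx * c)).
- by exists 1; rewrite mul1r mulr1.
- by exists x; exact: x_ev.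
- by exists (y + ev h^`()); exact: y_hx.
- by move=> a b [c Hc] [d Hd]; exists (c + d); rewrite mulrDl Hc Hd mulrDr.
- by move=> k a [c Hc]; exists (k *: c); rewrite -scalerAl Hc scalerAr.
- by move=> a b [c Hc] [d Hd]; exists (c * d); rewrite -mulrA Hd [a * _]mulrA Hc -mulrA.
Qed.

Local Notation inH := (hideal h x).

Lemma hideal0 : inH 0. Proof. by exists 0; rewrite mulr0. Qed.

Lemma hidealD a b : inH a -> inH b -> inH (a + b).
Proof. by move=> [c ->] [d ->]; exists (c + d); rewrite mulrDr. Qed.

Lemma hidealZ k a : inH a -> inH (k *: a).
Proof. by move=> [c ->]; exists (k *: c); rewrite scalerAr. Qed.

Lemma hidealMr a b : inH a -> inH (a * b).
Proof. by move=> [c ->]; exists (c * b); rewrite mulrA. Qed.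

Lemma hidealMl a b : inH a -> inH (b * a).
Proof.
by move=> [c ->]; have [d Hd] := hx_normal b; exists (d * c); rewrite [b * _]mulrA Hd mulrA.
Qed.

Lemma lie_hideal_gen g : inH (lie g x) -> inH (lie g y) -> forall a, inH (lie g a).
Proof.
move=> Hx Hy; apply: (@Ah_ind _ _ _ _ _ HA (fun a => inH (lie g a))) => //.
- by rewrite lie1r; exact: hideal0.
- by move=> a b Ha Hb; rewrite lieDr; exact: hidealD.
- by move=> k a Ha; rewrite lieZr; exact: hidealZ.
- by move=> a b Ha Hb; rewrite lieMr; apply: hidealD; [exact: hidealMr | exact: hidealMl].
Qed.

Lemma lie_hideal a b : inH (lie a b).
Proof.
have hx_in : inH hx by exists 1; rewrite mulr1.
have lie_x a' : inH (lie x a').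
  apply: lie_hideal_gen; first by rewrite lieaa; exact: hideal0.
  by rewrite lieN lie_y_x -scaleN1r; exact: hidealZ.
have lie_y a' : inH (lie y a').
  by apply: lie_hideal_gen; [rewrite lie_y_x | rewrite lieaa; exact: hideal0].
move: b; apply: (@Ah_ind _ _ _ _ _ HA (fun a => forall b, inH (lie a b))) => //.
- by move=> b; rewrite lie1l; exact: hideal0.
- by move=> u v Hu Hv b; rewrite lieDl; exact: hidealD.
- by move=> k u Hu b; rewrite lieZl; exact: hidealZ.
- by move=> u v Hu Hv b; rewrite lieMl; apply: hidealD; [exact: hidealMl | exact: hidealMr].
Qed.

Definition ydeg_lt (n : nat) (z : A) : Prop :=
  exists s : seq ({poly F} * nat),
    all (fun t => t.2 < n)%N s /\ z = \sum_(t <- s) ev t.1 * y ^+ t.2.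

Lemma ydeg_lt_ind n (P : A -> Prop) : P 0 -> (forall a b, P a -> P b -> P (a + b)) ->
  (forall p k, (k < n)%N -> P (ev p * y ^+ k)) -> forall z, ydeg_lt n z -> P z.
Proof.
move=> P0 PD Pm z [s [lt_s ->]]; elim: s lt_s => [|t s IH] /=; first by rewrite big_nil.
by move=> /andP [lt_t lt_s]; rewrite big_cons; apply: PD; [exact: Pm | exact: IH].
Qed.

Lemma ydeg_lt0 n : ydeg_lt n 0.
Proof. by exists [::]; rewrite big_nil. Qed.

Lemma ydeg_ltD n a b : ydeg_lt n a -> ydeg_lt n b -> ydeg_lt n (a + b).
Proof.
move=> [s [lt_s ->]] [t [lt_t ->]].
by exists (s ++ t); rewrite all_cat lt_s lt_t big_cat.
Qed.

Lemma ydeg_lt_monom n p k : (k < n)%N -> ydeg_lt n (ev p * y ^+ k).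
Proof. by move=> lt_kn; exists [:: (p, k)]; rewrite /= lt_kn big_seq1. Qed.

Lemma ydeg_lt_widen n m z : (n <= m)%N -> ydeg_lt n z -> ydeg_lt m z.
Proof.
move=> le_nm; apply: ydeg_lt_ind; [exact: ydeg_lt0 | exact: ydeg_ltD |].
by move=> p k lt_kn; apply: ydeg_lt_monom; exact: leq_trans lt_kn le_nm.
Qed.

Lemma ydeg_ltZ n c z : ydeg_lt n z -> ydeg_lt n (c *: z).
Proof.
move: z; apply: ydeg_lt_ind.
- by rewrite scaler0; exact: ydeg_lt0.
- by move=> a b Ha Hb; rewrite scalerDr; exact: ydeg_ltD.
- by move=> p k lt_kn; rewrite scalerAl -horner_algZ; exact: ydeg_lt_monom.
Qed.

Lemma ydeg_ltB n a b : ydeg_lt n a -> ydeg_lt n b -> ydeg_lt n (a - b).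
Proof. by move=> Ha Hb; rewrite -scaleN1r; apply: ydeg_ltD => //; exact: ydeg_ltZ. Qed.

Lemma ydeg_lt_evM n p z : ydeg_lt n z -> ydeg_lt n (ev p * z).
Proof.
move: z; apply: ydeg_lt_ind.
- by rewrite mulr0; exact: ydeg_lt0.
- by move=> a b Ha Hb; rewrite mulrDr; exact: ydeg_ltD.
- by move=> q k lt_kn; rewrite mulrA -rmorphM; exact: ydeg_lt_monom.
Qed.

Lemma ydeg_lt_yM n z : ydeg_lt n z -> ydeg_lt n.+1 (y * z).
Proof.
move: z; apply: ydeg_lt_ind.
- by rewrite mulr0; exact: ydeg_lt0.
- by move=> a b Ha Hb; rewrite mulrDr; exact: ydeg_ltD.
- move=> q k lt_kn; rewrite mulrA y_ev mulrDl -mulrA -exprS -rmorphM.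
  by apply: ydeg_ltD; apply: ydeg_lt_monom => //; exact: ltnW.
Qed.

Lemma ydeg_lt_exists z : exists n, ydeg_lt n z.
Proof.
apply: (@Ah_left_ind _ _ _ _ _ HA (fun z => exists n, ydeg_lt n z)).
- by exists 1%N; have := @ydeg_lt_monom 1 1 0 isT; rewrite rmorph1 mul1r.
- move=> a b [n Ha] [m Hb]; exists (maxn n m); apply: ydeg_ltD.
  + by apply: ydeg_lt_widen Ha; exact: leq_maxl.
  + by apply: ydeg_lt_widen Hb; exact: leq_maxr.
- by move=> c a [n Ha]; exists n; exact: ydeg_ltZ.
- by move=> a [n Ha]; exists n; have := ydeg_lt_evM 'X Ha; rewrite horner_algX.
- by move=> a [n Ha]; exists n.+1; exact: ydeg_lt_yM.
Qed.

Section CharZero.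
Hypothesis charF0 : [pchar F] =i pred0.

(* h(x) A lies in [y, A]: h(x) q(x) y^k = [y, r(x) y^k] for an antiderivative
   r of q. *)
Lemma hx_comm_y n z : ydeg_lt n z -> comm_with y (hx * z).
Proof.
move: z; apply: ydeg_lt_ind.
- by rewrite mulr0; exact: comm_with0.
- by move=> a b; rewrite mulrDr; exact: comm_withD.
- move=> q k _; have [r dr] := deriv_surj charF0 q.
  suff -> : hx * (ev q * y ^+ k) = lie y (ev r * y ^+ k) by exact: comm_with_lie.
  by rewrite lieMr lieX mulr0 addr0 lie_y_ev dr mulrA.
Qed.

Lemma lie_x_ypow n :
  exists e, ydeg_lt n e /\ lie x (y ^+ n.+1) = hx * (e - y ^+ n *+ n.+1).
Proof.
elim: n => [|n [e [deg_e lie_e]]].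
  exists 0; split; first exact: ydeg_lt0.
  by rewrite expr1 expr0 mulr1n sub0r mulrN1 lieN lie_y_x.
exists ((y + ev h^`()) * e - (ev h^`() * y ^+ n) *+ n.+1); split.
  apply: ydeg_ltB.
  - rewrite mulrDl; apply: ydeg_ltD; first exact: ydeg_lt_yM.
    by apply: (ydeg_lt_widen (leqnSn n)); exact: ydeg_lt_evM.
  - by rewrite -scaler_nat; apply: ydeg_ltZ; exact: ydeg_lt_monom.
rewrite exprS lieMr lieN lie_y_x lie_e mulrA y_hx -mulrA mulNr -mulrN -mulrDr.
congr (_ * _); rewrite mulrBr mulrnAr [(_ + _) * y ^+ n]mulrDl -exprS mulrnDl.
rewrite [y ^+ n.+1 *+ n.+2]mulrS [LHS]addrC -[LHS]addrA -[RHS]addrA -!opprD.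
by congr (_ - _); rewrite addrAC addrC; congr (_ + _); exact: addrC.
Qed.

(* h(x) A lies in [x, A], by induction on the y-degree: the leading monomial
   h(x) q(x) y^n is (n+1)^-1 (h(x) q(x) e - [x, q(x) y^(n+1)]) with e of lower
   y-degree; dividing by n+1 needs characteristic 0. *)
Lemma hx_comm_x n z : ydeg_lt n z -> comm_with x (hx * z).
Proof.
have inv_n1 m : (m.+1%:R : F) != 0 by move/pcharf0P: charF0 => ->.
elim: n z => [|n IH]; apply: ydeg_lt_ind => //.
- by rewrite mulr0; exact: comm_with0.
- by move=> a b; rewrite mulrDr; exact: comm_withD.
- by rewrite mulr0; exact: comm_with0.
- by move=> a b; rewrite mulrDr; exact: comm_withD.
move=> q k; rewrite ltnS leq_eqVlt => /predU1P [-> {k} | lt_kn]; last first.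
  exact/IH/ydeg_lt_monom.
have [e [deg_e lie_e]] := lie_x_ypow n.
have lead : hx * (ev q * y ^+ n) =
    (n.+1%:R)^-1 *: (hx * (ev q * e) - lie x (ev q * y ^+ n.+1)).
  rewrite lieMr lie_x_ev mul0r add0r lie_e [ev q * (hx * _)]mulrA -(ev_comm h q) -mulrA.
  rewrite -mulrBr [ev q * (e - _)]mulrBr opprB addrC subrK.
  by rewrite !mulrnAr -scaler_nat scalerA mulVf // scale1r.
rewrite lead; apply/comm_withZ/comm_withB; last exact: comm_with_lie.
exact/IH/ydeg_lt_evM.
Qed.

Lemma hideal_comm_x z : inH z -> comm_with x z.
Proof. by move=> [a ->]; have [n deg_a] := ydeg_lt_exists a; exact: hx_comm_x deg_a. Qed.

Lemma hideal_comm_y z : inH z -> comm_with y z.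
Proof. by move=> [a ->]; have [n deg_a] := ydeg_lt_exists a; exact: hx_comm_y deg_a. Qed.
End CharZero.

Lemma comm_with_hideal g z : comm_with g z -> inH z.
Proof. by move=> [b ->]; exact: lie_hideal. Qed.

Lemma comm_span_hideal z : comm_span z -> inH z.
Proof.
move=> [n [c [a [b ->]]]]; elim/big_ind: _ => //; [exact: hideal0 | exact: hidealD |].
by move=> i _; apply: hidealZ; exact: lie_hideal.
Qed.
End Ah.

Theorem proposition6p2 (F : fieldType) (hF : [pchar F] =i pred0)
  (h : {poly F}) (A : algType F) (x y : A) (HA : is_Ah h x y) :
  (forall z : A, hideal h x z <-> comm_with x z) /\
  (forall z : A, comm_with x z <-> comm_with y z) /\
  (forall z : A, comm_with y z <-> comm_span z).
Proof.
split; [|split] => z; split.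
- exact: (hideal_comm_x HA hF).
- exact: (comm_with_hideal HA).
- by move/(comm_with_hideal HA)/(hideal_comm_y HA hF).
- by move/(comm_with_hideal HA)/(hideal_comm_x HA hF).
- exact: comm_with_span.
- by move/(comm_span_hideal HA)/(hideal_comm_y HA hF).
Qed.
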